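(* Let $\varphi$ be a continuous Archimedean t-norm, let $m,n\ge 1$, $\mathscr{I}=\{1,\dots,m\}$, $\mathscr{J}=\{1,\dots,n\}$, let $A^{+}=(a^{+}_{ij}),A^{-}=(a^{-}_{ij})\in[0,1]^{m\times n}$ and $b=(b_i)\in[0,1]^m$. Let $S(A^{+},A^{-},b)$, $E$ and $S(e)$ ($e\in E$) be as defined in the context. Then $$S(A^{+},A^{-},b)=\bigcup_{e\in E}S(e).$$
   Context: A t-norm is a binary operation on $[0,1]$ that is commutative, associative, nondecreasing in each argument and has $1$ as neutral element; a continuous t-norm $\varphi$ is Archimedean if $\varphi(x,x)<x$ for all $x\in(0,1)$. Define $S(A^{+},A^{-},b)=\{x\in[0,1]^n:\ \max_{j\in\mathscr{J}}\max\{\varphi(a^{+}_{ij},x_j),\varphi(a^{-}_{ij},1-x_j)\}=b_i\ \forall i\in\mathscr{I}\}$. For $i\in\mathscr{I},j\in\mathscr{J}$: $S_{ij}=\{t\in[0,1]:\max\{\varphi(a^{+}_{ij},t),\varphi(a^{-}_{ij},1-t)\}=b_i\}$ and $I_{ij}=\{t\in[0,1]:\max\{\varphi(a^{+}_{ij},t),\varphi(a^{-}_{ij},1-t)\}\le b_i\}$. For $j\in\mathscr{J}$ let $I_j=\bigcap_{i\in\mathscr{I}}I_{ij}$, and let $S'_{ij}=S_{ij}\cap I_j$. For $i\in\mathscr{I}$ let $\mathscr{J}_i=\{j\in\mathscr{J}:S'_{ij}\neq\varnothing\}$. A function $e:\mathscr{I}\to\mathscr{J}$ is admissible if $e(i)\in\mathscr{J}_i(e)$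 for all $i\in\mathscr{I}$, where $\mathscr{J}_1(e)=\mathscr{J}_1$ and, for $i\ge 2$, with $\mathscr{I}_j(e,i)=\{k\in\mathscr{I}:1\le k<i,\ e(k)=j\}$, $\mathscr{J}_i(e)=\{j\in\mathscr{J}_i:\ \mathscr{I}_j(e,i)=\varnothing\ \text{or}\ S'_{ij}\cap\bigcap_{k\in\mathscr{I}_j(e,i)}S'_{kj}\neq\varnothing\}$. $E$ denotes the set of all admissible functions. For $e\in E$ and $j\in\mathscr{J}$ let $\mathscr{I}_j(e)=\{i\in\mathscr{I}:e(i)=j\}$, and let $S(e)$ be the set of all $x=(x_1,\dots,x_n)$ such that for every $j\in\mathscr{J}$: $x_j\in\bigcap_{i\in\mathscr{I}_j(e)}S'_{ij}$ if $\mathscr{I}_j(e)\neq\varnothing$, and $x_j\in I_j$ if $\mathscr{I}_j(e)=\varnothing$. (A union over an empty index set is $\varnothing$.) *)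

From HB Require Import structures.
From mathcomp Require Import all_boot all_order all_algebra.
From mathcomp Require Import boolp classical_sets reals.
Set Implicit Arguments. Unset Strict Implicit. Unset Printing Implicit Defensive.
Import Order.TTheory GRing.Theory Num.Theory.
Local Open Scope ring_scope.
Local Open Scope classical_set_scope.

Section Defs.
Variable R : realType.

Definition in01 (x : R) : Prop := 0 <= x <= 1.

Definition is_tnorm (phi : R -> R -> R) : Prop :=
  [/\ (forall x y, in01 x -> in01 y -> in01 (phi x y)),
      (forall x y, in01 x -> in01 y -> phi x y = phi y x),
      (forall x y z, in01 x -> in01 y -> in01 z ->
          phi x (phi y z) = phi (phi x y) z),
      (forall x x' y, in01 x -> in01 x' -> in01 y -> x <= x' ->
          phi x y <= phi x' y) &
      (forall x, in01 x -> phi x 1 = x)].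

Definition tnorm_continuous (phi : R -> R -> R) : Prop :=
  forall x y, in01 x -> in01 y -> forall eps : R, 0 < eps ->
    exists2 delta : R, 0 < delta &
      forall x' y', in01 x' -> in01 y' -> `|x - x'| < delta -> `|y - y'| < delta ->
        `|phi x y - phi x' y'| < eps.

Definition archimedean_tnorm (phi : R -> R -> R) : Prop :=
  forall x, 0 < x < 1 -> phi x x < x.

Definition cont_arch_tnorm phi :=
  [/\ is_tnorm phi, tnorm_continuous phi & archimedean_tnorm phi].

Variables (phi : R -> R -> R) (m n : nat)
  (Ap Am : 'I_m -> 'I_n -> R) (b : 'I_m -> R).

Definition Fval (i : 'I_m) (j : 'I_n) (t : R) : R :=
  Num.max (phi (Ap i j) t) (phi (Am i j) (1 - t)).

Definition Ssol : set ('I_n -> R) :=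
  [set x | (forall j, in01 (x j)) /\
           forall i, \big[Num.max/0]_(j < n) Fval i j (x j) = b i].

Definition Sij (i : 'I_m) (j : 'I_n) : set R :=
  [set t | in01 t /\ Fval i j t = b i].
Definition Iij (i : 'I_m) (j : 'I_n) : set R :=
  [set t | in01 t /\ Fval i j t <= b i].
Definition Ij (j : 'I_n) : set R := [set t | forall i, Iij i j t].
Definition S'ij (i : 'I_m) (j : 'I_n) : set R := Sij i j `&` Ij j.
Definition Ji (i : 'I_m) : set 'I_n := [set j | S'ij i j !=set0].

Definition Ije (e : 'I_m -> 'I_n) (j : 'I_n) (i : 'I_m) : set 'I_m :=
  [set k : 'I_m | (k < i)%N /\ e k = j].

(* J_i(e); for i = 1 (index 0) I_j(e,i) is empty, so this agrees with J_1 *)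
Definition Jie (e : 'I_m -> 'I_n) (i : 'I_m) : set 'I_n :=
  [set j | Ji i j /\
     (Ije e j i = set0 \/
      S'ij i j `&` \bigcap_(k in Ije e j i) S'ij k j !=set0)].

Definition admissible (e : 'I_m -> 'I_n) : Prop := forall i, Jie e i (e i).

Definition Eset : set ('I_m -> 'I_n) := [set e | admissible e].

Definition Iej (e : 'I_m -> 'I_n) (j : 'I_n) : set 'I_m := [set i | e i = j].

Definition Se (e : 'I_m -> 'I_n) : set ('I_n -> R) :=
  [set x | forall j,
     if pselect (Iej e j !=set0)
     then (\bigcap_(i in Iej e j) S'ij i j) (x j)
     else Ij j (x j)].

End Defs.

From HB Require Import structures.
From mathcomp Require Import all_boot all_order all_algebra.
From mathcomp Require Import boolp classical_sets reals.
Set Implicit Arguments. Unset Strict Implicit.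
Import Order.TTheory GRing.Theory Num.Theory.
Local Open Scope ring_scope.
Local Open Scope classical_set_scope.

(* A vector x solves the system iff every coordinate x_j lies in I_j (no
   equation is overshot) and every equation i is attained by some coordinate
   j, i.e. x_j lies in S'_ij.  An admissible e records one attaining coordinate
   per equation, and S(e) is exactly the set of x attained along e; the
   consistency condition in J_i(e) holds automatically for such a choice. *)

Section SolutionSet.
Variables (R : realType) (phi : R -> R -> R) (m n : nat).
Variables (Ap Am : 'I_m -> 'I_n -> R) (b : 'I_m -> R).
Hypothesis phi_ge0 : forall x y, in01 x -> in01 y -> 0 <= phi x y.
Hypothesis HAp : forall i j, in01 (Ap i j).

Local Notation Fval := (Fval phi Ap Am).
Local Notation Ij := (Ij phi Ap Am b).
Local Notation S'ij := (S'ij phi Ap Am b).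

Lemma Fval_ge0 i j t : in01 t -> 0 <= Fval i j t.
Proof. by move=> t01; rewrite le_max phi_ge0 ?HAp. Qed.

Lemma SsolP : (0 < m)%N -> (0 < n)%N -> forall x,
  Ssol phi Ap Am b x <->
  (forall j, Ij j (x j)) /\ (forall i, exists j, S'ij i j (x j)).
Proof.
move=> m_gt0 n_gt0 x; split.
- move=> [x01 x_sol].
  have xI j : Ij j (x j).
    by move=> i; split=> //; rewrite -(x_sol i); exact: le_bigmax.
  split=> // i.
  have [j _ max_j] := @eq_bigmax _ _ _ 0 (Ordinal n_gt0) predT
    (fun j => Fval i j (x j)) erefl (fun j _ => Fval_ge0 i j (x01 j)).
  by exists j; split=> //; split=> //; rewrite -max_j x_sol.
- move=> [xI x_att]; split=> [j|i]; first by have [] := xI j (Ordinal m_gt0).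
  have [j [[x01 Fj] _]] := x_att i.
  apply/eqP; rewrite eq_le; apply/andP; split.
    apply/bigmax_leP; split=> [|k _]; first by rewrite -Fj Fval_ge0.
    by have [] := xI k i.
  by rewrite -Fj; exact: le_bigmax.
Qed.

Lemma SeP e x :
  Se phi Ap Am b e x <->
  (forall j, Ij j (x j)) /\ (forall i, S'ij i (e i) (x (e i))).
Proof.
split=> [x_Se | [xI xS'] j]; last first.
  by case: pselect => /= [_ i <- | _]; [exact: xS' | exact: xI].
split=> [j | i].
- have := x_Se j; case: pselect => /= [[i ei_j] /(_ i ei_j) [] // | _ //].
- have := x_Se (e i); case: pselect => /= [_ | ei_empty]; first exact.
  by case: ei_empty; exists i.
Qed.

Lemma attaining_admissible e x :
  (forall i, S'ij i (e i) (x (e i))) -> admissible phi Ap Am b e.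
Proof.
move=> xS' i; split; first by exists (x (e i)).
by right; exists (x (e i)); split=> // k [_ <-].
Qed.

End SolutionSet.

Theorem theorem3 (R : realType) (phi : R -> R -> R) (m n : nat)
  (Ap Am : 'I_m -> 'I_n -> R) (b : 'I_m -> R) :
  cont_arch_tnorm phi -> (0 < m)%N -> (0 < n)%N ->
  (forall i j, in01 (Ap i j)) -> (forall i j, in01 (Am i j)) ->
  (forall i, in01 (b i)) ->
  Ssol phi Ap Am b =
    \bigcup_(e in Eset phi Ap Am b) Se phi Ap Am b e.
Proof.
move=> [[phi01 _ _ _ _] _ _] m_gt0 n_gt0 HAp _ _.
have phi_ge0 x y : in01 x -> in01 y -> 0 <= phi x y.
  by move=> x01 y01; have /andP[] := phi01 x y x01 y01.
have solP := SsolP Am b phi_ge0 HAp m_gt0 n_gt0.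
apply/seteqP; split=> x.
- move=> /solP [xI /choice [e xS']].
  by exists e; [exact: attaining_admissible xS' | apply/SeP].
- move=> [e _ /SeP [xI xS']].
  by apply/solP; split=> // i; exists (e i).
Qed.
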